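(* Let $M\in\mathbb R^{n\times n}$ be sufficient, $B$ a complementary basis, $i\in B$, and suppose $B'=(B\setminus\{i\})\cup\{\bar i\}$ is a basis (i.e. $A_{\cdot B'}$ is invertible). Then $\mathcal C(B\setminus\{i\})$ is a facet (face of dimension $n-1$) of both $\mathcal C(B)$ and $\mathcal C(B')$, $\mathcal C(B)\cap\mathcal C(B')=\mathcal C(B\setminus\{i\})$, and for every complementary basis $B''\notin\{B,B'\}$ the cone $\mathcal C(B'')$ does not intersect the relative interior of $\mathcal C(B\setminus\{i\})$.
   Context: Let $M\in\mathbb R^{n\times n}$ and $A=[\,I\;\;-M\,]\in\mathbb R^{n\times 2n}$, with columns indexed by $\{1,\dots,2n\}$; for $J\subseteq\{1,\dots,2n\}$, $A_{\cdot J}$ denotes the submatrix of columns indexed by $J$. For $i\in\{1,\dots,2n\}$ the complementary index is $\bar i=i+n$ if $i\le n$ and $\bar i=i-n$ if $i>n$. A set $J$ is complementary if $i\in J$ implies $\bar i\notin J$. A complementary basis is a complementary set $B$ with $|B|=n$ and $A_{\cdot B}$ invertible. For a complementary set $J$, the complementary cone is $\mathcal C(J)=\{A_{\cdot J}\lambda:\lambda\ge 0\}$. $M$ is column sufficient if $[z_i(Mz)_i\le 0\ \forall i]\Rightarrow[z_i(Mz)_i=0\ \forall i]$; row sufficient if $M^T$ is column sufficient; sufficient if both. *)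

(* Scalars: an arbitrary real field R (the paper uses the
   reals; everything here is order-algebraic, so R : realFieldType is a
   faithful generalization).  Vectors of R^n are row vectors 'rV[R]_n. *)
From HB Require Import structures.
From mathcomp Require Import all_boot all_order all_algebra.
Set Implicit Arguments. Unset Strict Implicit. Unset Printing Implicit Defensive.
Import Order.TTheory GRing.Theory Num.Theory.
Local Open Scope ring_scope.

Section LCP.
Variables (R : realFieldType) (n : nat).

Definition Amat (M : 'M[R]_n) : 'M[R]_(n, n + n) := row_mx 1%:M (- M).

Definition compl_idx (i : 'I_(n + n)) : 'I_(n + n) :=
  match split i with
  | inl j => rshift n j
  | inr j => lshift n j
  end.

Definition complementary (J : {set 'I_(n + n)}) : Prop :=
  forall i, i \in J -> compl_idx i \notin J.

(* the submatrix A_{.J} (columns of J, in increasing enumeration order) *)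
Definition Asub (M : 'M[R]_n) (J : {set 'I_(n + n)}) : 'M[R]_(n, #|J|) :=
  colsub (@enum_val _ (mem J)) (Amat M).

Definition is_basis (M : 'M[R]_n) (J : {set 'I_(n + n)}) : Prop :=
  exists e : #|J| = n, castmx (erefl n, e) (Asub M J) \in unitmx.

Definition comp_basis (M : 'M[R]_n) (J : {set 'I_(n + n)}) : Prop :=
  complementary J /\ is_basis M J.

Definition gen (M : 'M[R]_n) (j : 'I_(n + n)) : 'rV[R]_n := (col j (Amat M))^T.

Definition cone (M : 'M[R]_n) (J : {set 'I_(n + n)}) (x : 'rV[R]_n) : Prop :=
  exists lam : 'I_(n + n) -> R,
    (forall j, j \in J -> 0 <= lam j) /\ x = \sum_(j in J) lam j *: gen M j.

Definition column_sufficient (M : 'M[R]_n) : Prop :=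
  forall z : 'cV[R]_n,
    (forall k, z k 0 * (M *m z) k 0 <= 0) ->
    (forall k, z k 0 * (M *m z) k 0 = 0).

Definition row_sufficient (M : 'M[R]_n) : Prop := column_sufficient M^T.

Definition sufficient (M : 'M[R]_n) : Prop :=
  column_sufficient M /\ row_sufficient M.

Definition convex (S : 'rV[R]_n -> Prop) : Prop :=
  forall x y (t : R), S x -> S y -> 0 <= t <= 1 -> S (t *: x + (1 - t) *: y).

Definition is_face (F C : 'rV[R]_n -> Prop) : Prop :=
  (forall x, F x -> C x) /\ convex F /\
  (forall x y (t : R), C x -> C y -> 0 < t < 1 ->
     F (t *: x + (1 - t) *: y) -> F x /\ F y).

Definition aff_indep (k : nat) (p : 'I_k.+1 -> 'rV[R]_n) : bool :=
  row_free (\matrix_(i < k) (p (lift ord0 i) - p ord0)).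

Definition aff_dim (S : 'rV[R]_n -> Prop) (d : nat) : Prop :=
  (exists p : 'I_d.+1 -> 'rV[R]_n, (forall i, S (p i)) /\ aff_indep p) /\
  (forall p : 'I_d.+2 -> 'rV[R]_n, (forall i, S (p i)) -> ~~ aff_indep p).

Definition is_facet (F C : 'rV[R]_n -> Prop) : Prop :=
  is_face F C /\ aff_dim F n.-1.

Definition aff_hull (S : 'rV[R]_n -> Prop) (y : 'rV[R]_n) : Prop :=
  exists (k : nat) (p : 'I_k -> 'rV[R]_n) (c : 'I_k -> R),
    (forall i, S (p i)) /\ \sum_(i < k) c i = 1 /\ y = \sum_(i < k) c i *: p i.

(* relative interior (neighbourhoods w.r.t. the max-norm) *)
Definition rel_int (S : 'rV[R]_n -> Prop) (x : 'rV[R]_n) : Prop :=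
  S x /\ exists eps : R, 0 < eps /\
    forall y, aff_hull S y -> (forall k, `|y 0 k - x 0 k| < eps) -> S y.

End LCP.

From HB Require Import structures.
From mathcomp Require Import all_boot all_order all_algebra lra.
Set Implicit Arguments. Unset Strict Implicit. Unset Printing Implicit Defensive.
Import Order.TTheory GRing.Theory Num.Theory.
Local Open Scope ring_scope.

(* Points of a cone C(J) are described by coefficient functions
   l : 'I_(n+n) -> R that are nonnegative and vanish outside J.  Two facts
   drive the whole proof:
   - linear independence of the columns of a basis makes such coefficients
     unique (uniq_rep);
   - column sufficiency of M forces, for two nonnegative complementary
     representations l1, l2 of the same point, l1 j * l2 (compl j) = 0 for
     every j (suff_cross).
   From uniqueness, dropping one generator c of an independent set J yields
   a face of C(J) of dimension #|J| - 1, hence a facet when J is a basis.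
   From suff_cross, C(B) and C(B') meet exactly in C(B \ i).  Finally a
   point of the relative interior of C(B \ i) has strictly positive
   coefficients on B \ i; any other complementary basis B'' contains the
   complement of some k in B \ i, and suff_cross together with uniqueness
   forces the coefficient of k in a B''-representation to be both positive
   and zero. *)

Section AdjacentCones.
Variables (R : realFieldType) (n : nat) (M : 'M[R]_n).

Implicit Types (J B : {set 'I_(n + n)}) (l c : 'I_(n + n) -> R).

Lemma compl_l (k : 'I_n) : compl_idx (lshift n k) = rshift n k.
Proof. by rewrite /compl_idx (unsplitK (inl _ k)). Qed.

Lemma compl_r (k : 'I_n) : compl_idx (rshift n k) = lshift n k.
Proof. by rewrite /compl_idx (unsplitK (inr _ k)). Qed.

Lemma ord_cases (j : 'I_(n + n)) :
  (exists k, j = lshift n k) \/ (exists k, j = rshift n k).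
Proof. by move: (splitK j); case: (split j) => k /= <-; [left|right]; exists k. Qed.

Lemma complK (j : 'I_(n + n)) : compl_idx (compl_idx j) = j.
Proof. by case: (ord_cases j) => [[k ->]|[k ->]]; rewrite ?(compl_l, compl_r). Qed.

Lemma compl_neq (j : 'I_(n + n)) : compl_idx j != j.
Proof.
case: (ord_cases j) => [[k ->]|[k ->]]; rewrite ?compl_l ?compl_r;
  apply/negP => /eqP/(congr1 val) /= E; move: (ltn_ord k).
  by rewrite -E ltnNge leq_addr.
by rewrite E ltnNge leq_addr.
Qed.

Definition pidx (j : 'I_(n + n)) : 'I_n :=
  match split j with inl k => k | inr k => k end.

Lemma pidx_eq (a b : 'I_(n + n)) : pidx a = pidx b -> a = b \/ a = compl_idx b.
Proof.
rewrite /pidx.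
case: (ord_cases a) => [[k ->]|[k ->]]; case: (ord_cases b) => [[k' ->]|[k' ->]];
  rewrite ?(unsplitK (inl _ _)) ?(unsplitK (inr _ _)) ?compl_l ?compl_r => ->;
  by [left|right].
Qed.

Lemma pair_cover J : complementary J -> #|J| = n ->
  forall m, m \in J \/ compl_idx m \in J.
Proof.
move=> hc hn.
have inj : {in J &, injective pidx}.
  by move=> a b ha hb /pidx_eq [//| hab]; move: (hc b hb); rewrite -hab ha.
have full : pidx @: J = setT.
  by apply/eqP; rewrite eqEcard subsetT cardsT card_ord card_in_imset ?hn ?leqnn.
move=> m; have : pidx m \in pidx @: J by rewrite full inE.
by case/imsetP => a ha /pidx_eq [-> | ->]; [left | right; rewrite complK].
Qed.

Lemma complementary_pivot B i : complementary B -> i \in B ->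
  complementary (compl_idx i |: (B :\ i)).
Proof.
move=> hcB hiB j; rewrite in_setU1 => /orP [/eqP -> | ].
  by rewrite complK !inE eqxx /= orbF eq_sym compl_neq.
rewrite in_setD1 => /andP [ji jB]; rewrite !inE (negbTE (hcB j jB)) andbF orbF.
by apply/eqP => /(congr1 (@compl_idx n)); rewrite !complK => /eqP; apply/negP.
Qed.

Lemma flipped_index B B'' i : complementary B'' -> i \in B ->
  #|B| = n -> #|compl_idx i |: (B :\ i)| = n -> #|B''| = n ->
  B'' <> B -> B'' <> compl_idx i |: (B :\ i) ->
  exists2 k, k \in B :\ i & compl_idx k \in B''.
Proof.
move=> hc'' hiB hB hB' hB'' nB nB'.
have [/existsP [k /andP [h1 h2]] | hno] :=
  boolP [exists k, (k \in B :\ i) && (compl_idx k \in B'')]; first by exists k.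
have sub : B :\ i \subset B''.
  apply/subsetP => k hk; case: (pair_cover hc'' hB'' k) => // hk'.
  by move/existsPn: hno => /(_ k); rewrite hk hk'.
have eq_of_sub J : #|J| = n -> J \subset B'' -> B'' = J.
  by move=> hJ s; apply/eqP; rewrite eq_sym eqEcard s hJ hB'' leqnn.
case: (pair_cover hc'' hB'' i) => hi; exfalso; [apply: nB | apply: nB'];
  apply: eq_of_sub => //; apply/subsetP => j.
  by case: (eqVneq j i) => [-> //| ne] hj; apply: (subsetP sub); rewrite !inE ne.
by rewrite in_setU1 => /orP [/eqP -> // | ]; apply: (subsetP sub).
Qed.

Definition supported J l := forall j, j \notin J -> l j = 0.

Definition combo l : 'rV[R]_n := \sum_j l j *: gen M j.

Lemma supported_sub J J' l : J \subset J' -> supported J l -> supported J' l.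
Proof. by move=> s h j hj; apply: h; apply: contra hj; apply: (subsetP s). Qed.

Lemma supported_setD1 J l j : supported J l -> l j = 0 -> supported (J :\ j) l.
Proof. by move=> h hj k; rewrite in_setD1 negb_and negbK => /orP [/eqP -> | /h]. Qed.

Lemma combo_supp J l : supported J l -> combo l = \sum_(j in J) l j *: gen M j.
Proof.
move=> hz; rewrite /combo [RHS]big_mkcond; apply: eq_bigr => j _.
by case: ifP => // /negbT /hz ->; rewrite scale0r.
Qed.

Lemma gen_entry (j : 'I_(n + n)) r : gen M j 0 r = Amat M r j.
Proof. by rewrite /gen !mxE. Qed.

Lemma combo_entry l r :
  combo l 0 r = l (lshift n r) - (M *m \col_k l (rshift n k)) r 0.
Proof.
rewrite /combo summxE big_split_ord /=.
have -> : \sum_(k < n) (l (lshift n k) *: gen M (lshift n k)) 0 r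
          = (1%:M *m \col_k l (lshift n k)) r 0.
  rewrite mxE; apply: eq_bigr => k _.
  by rewrite [LHS]mxE gen_entry /Amat row_mxEl [X in _ = _ * X]mxE mulrC.
rewrite mul1mx mxE mxE -sumrN; congr (_ + _); apply: eq_bigr => k _.
by rewrite [LHS]mxE gen_entry /Amat row_mxEr !mxE mulrN mulrC.
Qed.

Lemma combo_lin l1 l2 (a b : R) :
  a *: combo l1 + b *: combo l2 = combo (fun j => a * l1 j + b * l2 j).
Proof.
rewrite /combo !scaler_sumr -big_split /=; apply: eq_bigr => j _.
by rewrite scalerDl !scalerA.
Qed.

Lemma coneP J x : cone M J x <->
  exists l, [/\ forall j, 0 <= l j, supported J l & x = combo l].
Proof.
split.
  case=> lam [hl ->]; exists (fun j => if j \in J then lam j else 0); split.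
  - by move=> j; case: ifP => [/hl //|_]; exact: lexx.
  - by move=> j /negbTE ->.
  - rewrite /combo big_mkcond /=; apply: eq_bigr => j _.
    by case: ifP => _; rewrite ?scale0r.
by case=> l [hl hz ->]; exists l; split => //; exact: combo_supp.
Qed.

Lemma cone_lin J x y (a b : R) : 0 <= a -> 0 <= b ->
  cone M J x -> cone M J y -> cone M J (a *: x + b *: y).
Proof.
move=> ha hb /coneP [l1 [p1 z1 ->]] /coneP [l2 [p2 z2 ->]].
apply/coneP; eexists; split; last exact: combo_lin.
- by move=> j; rewrite addr_ge0 ?mulr_ge0.
- by move=> j hj; rewrite z1 ?z2 ?mulr0 ?addr0.
Qed.

Lemma cone_gen J j : j \in J -> cone M J (gen M j).
Proof.
move=> hj; apply/coneP; exists (fun j' => (j' == j)%:R); split.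
- by move=> j'; rewrite ler0n.
- by move=> j' hj'; case: eqP hj' => // ->; rewrite hj.
- rewrite /combo (bigD1 j) //= eqxx scale1r big1 ?addr0 // => j' /negbTE ->.
  by rewrite scale0r.
Qed.

Lemma cone0 J : cone M J 0.
Proof. by exists (fun _ => 0); split => //; rewrite big1 // => j _; rewrite scale0r.
Qed.

Lemma cone_sub J J' x : J \subset J' -> cone M J x -> cone M J' x.
Proof.
by move=> s /coneP [l [p z ->]]; apply/coneP; exists l; split => //;
  apply: supported_sub s z.
Qed.

(* If l1 and l2 are nonnegative complementary
   coefficient vectors of the same point, then z = l1_N - l2_N satisfies
   (Mz)_k = (l1_B - l2_B)_k and z_k (Mz)_k = -(cross terms) <= 0; column
   sufficiency makes these products vanish, hence every cross term. *)
Lemma suff_cross (hM : column_sufficient M) l1 l2 :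
  (forall j, 0 <= l1 j) -> (forall j, 0 <= l2 j) ->
  (forall j, l1 j * l1 (compl_idx j) = 0) ->
  (forall j, l2 j * l2 (compl_idx j) = 0) ->
  combo l1 = combo l2 -> forall j, l1 j * l2 (compl_idx j) = 0.
Proof.
move=> p1 p2 c1 c2 E.
set z := \col_k (l1 (rshift n k) - l2 (rshift n k)) : 'cV[R]_n.
have Mz k : (M *m z) k 0 = l1 (lshift n k) - l2 (lshift n k).
  have := congr1 (fun x : 'rV[R]_n => x 0 k) E; rewrite /= !combo_entry.
  have -> : z = \col_k l1 (rshift n k) - \col_k l2 (rshift n k).
    by apply/matrixP => a b; rewrite !mxE.
  by move=> Ek; rewrite mulmxBr [LHS]mxE [X in _ + X]mxE; lra.
have key k : z k 0 * (M *m z) k 0 =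
    - (l1 (rshift n k) * l2 (lshift n k) + l2 (rshift n k) * l1 (lshift n k)).
  have h1 := c1 (lshift n k); have h2 := c2 (lshift n k).
  rewrite compl_l mulrC in h1; rewrite compl_l mulrC in h2.
  by rewrite Mz mxE mulrBl !mulrBr h1 h2; lra.
have cross0 k : l1 (rshift n k) * l2 (lshift n k) = 0 /\
                l2 (rshift n k) * l1 (lshift n k) = 0.
  have : z k 0 * (M *m z) k 0 = 0.
    by apply: hM => k'; rewrite key oppr_le0 addr_ge0 // mulr_ge0.
  rewrite key => /eqP; rewrite oppr_eq0 paddr_eq0 ?mulr_ge0 //.
  by case/andP => /eqP -> /eqP ->.
move=> j; case: (ord_cases j) => [[k ->]|[k ->]].
  by rewrite compl_l mulrC; case: (cross0 k).
by rewrite compl_r; case: (cross0 k).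
Qed.

Lemma comp_prod J l : complementary J -> supported J l ->
  forall j, l j * l (compl_idx j) = 0.
Proof.
move=> hc hz j; case: (boolP (j \in J)) => hj; last by rewrite hz ?mul0r.
by rewrite (hz (compl_idx j)) ?mulr0 // hc.
Qed.

Definition indep J := forall c, supported J c -> combo c = 0 -> forall j, c j = 0.

Lemma indep_sub J J' : J' \subset J -> indep J -> indep J'.
Proof. by move=> s h c hc; apply: h; apply: supported_sub hc. Qed.

Lemma uniq_rep J l1 l2 : indep J -> supported J l1 -> supported J l2 ->
  combo l1 = combo l2 -> forall j, l1 j = l2 j.
Proof.
move=> h h1 h2 E j; apply/eqP; rewrite -subr_eq0; apply/eqP; move: j.
apply: (h (fun j => l1 j - l2 j)) => [j hj|]; first by rewrite h1 ?h2 ?subrr.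
rewrite /combo (eq_bigr (fun j => l1 j *: gen M j - l2 j *: gen M j)) => [|j _].
  by rewrite sumrB -/(combo l1) -/(combo l2) E subrr.
by rewrite scalerBl.
Qed.

Lemma sum_Asub J c :
  \sum_(j in J) c j *: gen M j = (\row_k c (enum_val k)) *m (Asub M J)^T.
Proof.
rewrite big_enum_val; apply/matrixP => a r; rewrite summxE !mxE.
by apply: eq_bigr => k _; rewrite (ord1 a) !mxE.
Qed.

Lemma cast_unit_inj (m k : nat) (e : m = k) (X : 'M[R]_(k, m)) :
  castmx (erefl k, e) X \in unitmx -> forall v : 'rV_m, v *m X^T = 0 -> v = 0.
Proof.
case: k / e X => X; rewrite castmx_id => uX v Hv.
by rewrite -(mulmxK (_ : X^T \in unitmx) v) ?Hv ?mul0mx ?unitmx_tr.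
Qed.

Lemma basis_indep J : is_basis M J -> indep J.
Proof.
case=> e uA c hc hs j; case: (boolP (j \in J)) => hj; last exact: hc.
have : \row_k c (enum_val k) = 0 :> 'rV_#|J|.
  by apply: (cast_unit_inj uA); rewrite -sum_Asub -combo_supp.
by move/matrixP/(_ 0 (enum_rank_in hj j)); rewrite !mxE (enum_rankK_in hj hj).
Qed.

Lemma indep_rowfree J : indep J -> row_free (Asub M J)^T.
Proof.
move=> hI; apply/inj_row_free => v hv.
pose c j := if [pick k | enum_val k == j] is Some k then v 0 k else 0.
have cev k : c (enum_val k) = v 0 k.
  rewrite /c; case: pickP => [k' /eqP /enum_val_inj -> //|].
  by move/(_ k); rewrite eqxx.
have cz : supported J c.
  move=> j hj; rewrite /c; case: pickP => [k' /eqP hk'|//].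
  by move: hj; rewrite -hk' enum_valP.
have cs : combo c = 0.
  rewrite (combo_supp cz) sum_Asub -hv; congr (_ *m _).
  by apply/rowP => k; rewrite [LHS]mxE cev.
by apply/rowP => k; rewrite [RHS]mxE -cev; exact: hI cz cs _.
Qed.

(* Dropping a generator c from an independent set gives a face: a point of
   C(J \ c) has zero c-coefficient, and by uniqueness so do both ends of any
   segment of C(J) through it. *)
Lemma cone_drop_face J (c : 'I_(n + n)) :
  indep J -> is_face (cone M (J :\ c)) (cone M J).
Proof.
move=> hI; split; [|split].
- by move=> x; apply: cone_sub; exact: subD1set.
- by move=> x y t hx hy /andP [t0 t1]; apply: cone_lin; rewrite ?subr_ge0.
move=> x y t /coneP [lx [px zx ex]] /coneP [ly [py zy ey]] /andP [t0 t1].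
move=> /coneP [lz [pz zz ez]].
have sJc : J :\ c \subset J := subD1set J c.
have E : forall j, t * lx j + (1 - t) * ly j = lz j.
  apply: (uniq_rep hI); last by rewrite -combo_lin -ex -ey.
    by move=> j hj; rewrite zx ?zy ?mulr0 ?addr0.
  exact: supported_sub sJc zz.
have t1' : 0 < 1 - t by rewrite subr_gt0.
have [t0w t1w] := (ltW t0, ltW t1').
have := E c; rewrite zz ?setD11 // => /eqP.
rewrite paddr_eq0 ?mulr_ge0 // !mulf_eq0 (gt_eqF t0) (gt_eqF t1') /=.
case/andP => /eqP lxc /eqP lyc.
by split; apply/coneP; [exists lx | exists ly]; split => //; apply: supported_setD1.
Qed.

Lemma cone_aff_dim J : indep J -> aff_dim (cone M J) #|J|.
Proof.
move=> hI; split.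
  pose p (s : 'I_#|J|.+1) :=
    if unlift ord0 s is Some t then gen M (enum_val t) else 0.
  exists p; split.
    by move=> s; rewrite /p; case: (unlift ord0 s) => [t|];
      [apply: cone_gen; exact: enum_valP | exact: cone0].
  rewrite /aff_indep.
  have -> : \matrix_(s < #|J|) (p (lift ord0 s) - p ord0) = (Asub M J)^T.
    apply/matrixP => s r; rewrite !mxE /p liftK unlift_none.
    by rewrite [X in _ - X]mxE subr0 !mxE.
  exact: indep_rowfree.
move=> p hp; set X := \matrix_(s < #|J|.+1) (p (lift ord0 s) - p ord0).
have span x : cone M J x -> exists v : 'rV_#|J|, x = v *m (Asub M J)^T.
  case/coneP=> l [_ hz ->]; exists (\row_k l (enum_val k)).
  by rewrite (combo_supp hz) sum_Asub.
have sub : (X <= (Asub M J)^T)%MS.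
  apply/row_subP => s; rewrite rowK.
  have [v1 ->] := span _ (hp (lift ord0 s)); have [v0 ->] := span _ (hp ord0).
  by rewrite -mulmxBl; exact: submxMl.
apply/negP => /eqP hr.
have := leq_trans (mxrankS sub) (rank_leq_row (Asub M J)^T).
by rewrite hr ltnn.
Qed.

Lemma basis_facet J (c : 'I_(n + n)) : is_basis M J -> c \in J ->
  is_facet (cone M (J :\ c)) (cone M J).
Proof.
move=> hB hc; have hI := basis_indep hB; split; first exact: cone_drop_face.
have -> : n.-1 = #|J :\ c|.
  by have [e _] := hB; rewrite -[n in n.-1]e (cardsD1 c J) hc.
by apply: cone_aff_dim; apply: indep_sub hI; exact: subD1set.
Qed.

(* Two adjacent complementary cones meet exactly in their common facet:
   the cross term at i kills either the i- or the compl(i)-coefficient. *)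
Lemma cone_pivot_cap B i : column_sufficient M -> complementary B ->
  complementary (compl_idx i |: (B :\ i)) ->
  forall x, (cone M B x /\ cone M (compl_idx i |: (B :\ i)) x) <->
            cone M (B :\ i) x.
Proof.
move=> hM hcB hcB' x; split; last first.
  by move=> h; split; apply: cone_sub h; [exact: subD1set | exact: subsetUr].
case=> /coneP [l1 [p1 z1 e1]] /coneP [l2 [p2 z2 e2]].
have := suff_cross hM p1 p2 (comp_prod hcB z1) (comp_prod hcB' z2)
  (etrans (esym e1) e2) i.
move/eqP; rewrite mulf_eq0 => /orP [/eqP h | /eqP h]; apply/coneP.
  by exists l1; split => //; apply: supported_setD1.
exists l2; split => //; apply: supported_sub (supported_setD1 z2 h).
by apply/subsetP => j; rewrite !inE => /andP [/negbTE ->].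
Qed.

Lemma aff_hull_line (S : 'rV[R]_n -> Prop) x y (d : R) : S x -> S y ->
  aff_hull S ((1 + d) *: x - d *: y).
Proof.
move=> hx hy; exists 2%N, (fun s : 'I_2 => if (s : nat) == 0%N then x else y),
  (fun s : 'I_2 => if (s : nat) == 0%N then 1 + d else - d).
split; first by move=> s; case: ifP.
by rewrite !big_ord_recl !big_ord0 /= addr0 addrK scaleNr addr0.
Qed.

Lemma small_step (g : 'rV[R]_n) (eps : R) : 0 < eps ->
  exists2 d : R, 0 < d & forall k, `|d * g 0 k| < eps.
Proof.
move=> heps; pose S := \sum_k `|g 0 k|.
have S0 : 0 <= S by apply: sumr_ge0 => k _; exact: normr_ge0.
have S1 : 0 < S + 1 by apply: (le_lt_trans S0); rewrite ltrDl ltr01.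
exists (eps / (S + 1)) => [|k]; first by rewrite divr_gt0.
rewrite normrM gtr0_norm ?divr_gt0 // mulrAC ltr_pdivrMr // ltr_pM2l //.
rewrite (le_lt_trans _ (_ : S < S + 1)) ?ltrDl ?ltr01 //.
by rewrite /S (bigD1 k) //= lerDl; apply: sumr_ge0 => k' _; exact: normr_ge0.
Qed.

(* In the relative interior of the cone of independent columns every
   coefficient is positive: otherwise x - d * gen j would still be in the
   cone, with j-coefficient -d < 0. *)
Lemma rel_int_pos J x l : indep J -> rel_int (cone M J) x ->
  (forall j, 0 <= l j) -> supported J l -> x = combo l ->
  forall j, j \in J -> 0 < l j.
Proof.
move=> hI [hx [eps [heps hrel]]] p1 z1 e1 j hj.
rewrite lt_def p1 andbT; apply/negP => /eqP l1j; set g := gen M j.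
have [d d0 hd] := small_step g heps.
have hy : cone M J (x - d *: g).
  apply: hrel => [|k]; last first.
    suff -> : forall v : 'rV[R]_n, (x - d *: v) 0 k - x 0 k = - (d * v 0 k).
      by rewrite normrN.
    by move=> v; rewrite !mxE addrAC subrr add0r.
  have -> : x - d *: g = (1 + d) *: x - d *: (x + g).
    by rewrite scalerDl scale1r scalerDr opprD addrA addrK.
  apply: aff_hull_line => //; have -> : x + g = 1 *: x + 1 *: g by rewrite !scale1r.
  by apply: cone_lin; rewrite ?ler01 //; exact: cone_gen.
case/coneP: hy => l' [p' z' e'].
pose lj j' := l j' - (if j' == j then d else 0).
have hlj : supported J lj.
  by move=> j' hj'; rewrite /lj z1 //; case: eqP hj' => [-> | _]; rewrite ?hj ?subrr.
have : l' j = lj j.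
  have dg : d *: g = combo (fun j' => if j' == j then d else 0).
    rewrite /combo (bigD1 j) //= eqxx big1 ?addr0 // => j' /negbTE ->.
    by rewrite scale0r.
  apply: (uniq_rep hI z' hlj); rewrite -e' e1 dg /combo -sumrB.
  by apply: eq_bigr => j' _; rewrite scalerBl.
rewrite /lj eqxx l1j sub0r => h; have := p' j.
by rewrite h oppr_ge0 leNgt d0.
Qed.

Lemma support_adjacent B B'' i l1 l2 :
  complementary B -> #|B| = n -> complementary B'' -> supported B'' l2 ->
  (forall j, j \in B :\ i -> 0 < l1 j) ->
  (forall j, l2 j * l1 (compl_idx j) = 0) ->
  supported B l2 \/ supported (compl_idx i |: (B :\ i)) l2.
Proof.
move=> hcB hB hc'' z2 pos cross.
have supp j : l2 j != 0 -> j \in B \/ j = compl_idx i.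
  move=> hj; case: (pair_cover hcB hB j) => [| hcj]; first by left.
  case: (eqVneq (compl_idx j) i) => [<- | ne]; first by right; rewrite complK.
  have /gt_eqF : 0 < l1 (compl_idx j) by apply: pos; rewrite in_setD1 ne.
  by move/eqP: (cross j); rewrite mulf_eq0 (negbTE hj) => /= ->.
have nz_supp J : (forall j, l2 j != 0 -> j \in J) -> supported J l2.
  by move=> h j hj; apply/eqP; apply: contraNT hj; apply: h.
case: (eqVneq (l2 (compl_idx i)) 0) => h2; [left | right]; apply: nz_supp => j hj.
  by case: (supp j hj) => // ji; move: hj; rewrite ji h2 eqxx.
have i'B'' : compl_idx i \in B'' by apply: contraT => /z2 h; rewrite h eqxx in h2.
have l2i : l2 i = 0 by apply: z2; move: (hc'' _ i'B''); rewrite complK.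
case: (supp j hj) => [jB | ->]; last exact: setU11.
by rewrite !inE jB andbT; case: (eqVneq j i) hj => [-> | _ _]; rewrite ?l2i ?eqxx ?orbT.
Qed.

Lemma rel_int_avoid B i B'' x : column_sufficient M ->
  comp_basis M B -> i \in B -> is_basis M (compl_idx i |: (B :\ i)) ->
  comp_basis M B'' -> B'' <> B -> B'' <> compl_idx i |: (B :\ i) ->
  cone M B'' x -> ~ rel_int (cone M (B :\ i)) x.
Proof.
move=> hM [hcB hbB] hiB hbB' [hc'' hb''] nB nB' /coneP [l2 [p2 z2 e2]] hint.
have [eB _] := hbB; have [eB' _] := hbB'; have [e'' _] := hb''.
have hIB := basis_indep hbB; have hIB' := basis_indep hbB'.
have [l1 [p1 z1 e1]] := (coneP _ _).1 hint.1.
have z1B : supported B l1 by apply: supported_sub z1; exact: subD1set.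
have pos := rel_int_pos (indep_sub (subD1set B i) hIB) hint p1 z1 e1.
have [k hk hk''] := flipped_index hc'' hiB eB eB' e'' nB nB'.
have cross := suff_cross hM p2 p1 (comp_prod hc'' z2) (comp_prod hcB z1B)
  (etrans (esym e2) e1).
have eqk : l1 k = l2 k.
  have [hs | hs] := support_adjacent hcB eB hc'' z2 pos cross.
    by apply: (uniq_rep hIB z1B hs); rewrite -e1 -e2.
  apply: (uniq_rep hIB' _ hs); last by rewrite -e1 -e2.
  by apply: supported_sub z1; exact: subsetUr.
have := pos k hk; rewrite eqk z2 ?ltxx //.
by move: (hc'' _ hk''); rewrite complK.
Qed.

End AdjacentCones.

Theorem mainTheorem2 (R : realFieldType) (n : nat) (M : 'M[R]_n)
    (B : {set 'I_(n + n)}) (i : 'I_(n + n)) :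
  sufficient M ->
  comp_basis M B ->
  i \in B ->
  is_basis M (compl_idx i |: (B :\ i)) ->
  [/\ is_facet (cone M (B :\ i)) (cone M B),
      is_facet (cone M (B :\ i)) (cone M (compl_idx i |: (B :\ i))),
      (forall x, (cone M B x /\ cone M (compl_idx i |: (B :\ i)) x)
                 <-> cone M (B :\ i) x)
    & (forall B'' : {set 'I_(n + n)}, comp_basis M B'' ->
         B'' <> B -> B'' <> compl_idx i |: (B :\ i) ->
         forall x, cone M B'' x -> ~ rel_int (cone M (B :\ i)) x)].
Proof.
move=> [hM _] hB hiB hbB'; have [hcB hbB] := hB.
have hcB' := complementary_pivot hcB hiB.
split.
- exact: basis_facet.
- rewrite -{1}(setU1K (_ : compl_idx i \notin B :\ i)); last first.
    by rewrite in_setD1 negb_and hcB ?orbT.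
  by apply: basis_facet; rewrite ?setU11.
- exact: cone_pivot_cap.
- by move=> B'' hB'' nB nB' x; apply: rel_int_avoid.
Qed.
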